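(* Let $p\ge 2$ and $q\in\{0,1,\dots,p-2\}$ be integers, let $x$ be a right vertex of $T_H$, let $f$ be any $2p$ distance coloring of $T_H$, and let $v\in\mathcal{F}^{c}_{x,p-q}$ be a corner vertex. Then $$\big|\{u\in\mathcal{F}_{x,p+q+1} : f(u)=f(v)\}\big|\le 2.$$
   Context: $T_H$ is the infinite hexagonal grid with vertex set $\mathbb{Z}^2$: $(i,j)$ is adjacent to $(i,j\pm1)$, and $(i,j)$ is adjacent to $(i+1,j)$ iff $i+j$ is even; no other edges. A vertex $(i,j)$ with $i+j$ even is called a right vertex. $d(u,v)$ is graph distance. A $2p$ distance coloring is a map $f:V(T_H)\to\{1,\dots,n\}$ with $f(u)\ne f(v)$ for all distinct $u,v$ with $d(u,v)\le 2p$. For a vertex $x$ and integer $k\ge0$, $\mathcal{F}_{x,k}=\{u: d(x,u)=k\}$. For a right vertex $x=(i,j)$ and $k\ge2$, the six corner vertices of $\mathcal{F}_{x,k}$ are $(i,j+k)$, $(i+\lceil k/2\rceil, j+\lfloor k/2\rfloor)$, $(i+\lceil k/2\rceil, j-\lfloor k/2\rfloor)$, $(i,j-k)$, $(i-\lfloor k/2\rfloor, j-\lceil k/2\rceil)$, $(i-\lfloor k/2\rfloor, j+\lceil k/2\rceil)$ (all lie in $\mathcal{F}_{x,k}$); their set is denoted $\mathcal{F}^c_{x,k}$, and $\mathcal{F}^{nc}_{x,k}=\mathcal{F}_{x,k}\setminus\mathcal{F}^c_{x,k}$ is the set of non corner vertices. *)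

From Stdlib Require Import ZArith List Lia.
Import ListNotations.
Open Scope Z_scope.

(* Vertices of the infinite hexagonal grid T_H: Z^2. *)
Definition vtx := (Z * Z)%type.

Definition adj (u v : vtx) : Prop :=
  let (i, j) := u in let (k, l) := v in
  (k = i /\ (l = j + 1 \/ l = j - 1))
  \/ (k = i + 1 /\ l = j /\ Z.even (i + j) = true)
  \/ (k = i - 1 /\ l = j /\ Z.even (k + l) = true).

Definition right_vertex (x : vtx) : Prop := Z.even (fst x + snd x) = true.

Inductive walk : vtx -> vtx -> nat -> Prop :=
| walk_nil : forall u, walk u u 0
| walk_cons : forall u w v n, adj u w -> walk w v n -> walk u v (S n).

Definition dist_eq (u v : vtx) (k : nat) : Prop :=
  walk u v k /\ forall m, (m < k)%nat -> ~ walk u v m.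

Definition dist_le (u v : vtx) (k : nat) : Prop :=
  exists m, (m <= k)%nat /\ walk u v m.

Definition distance_coloring (p n : nat) (f : vtx -> nat) : Prop :=
  (forall u, (1 <= f u <= n)%nat) /\
  (forall u v, u <> v -> dist_le u v (2 * p) -> f u <> f v).

Definition F (x : vtx) (k : nat) (u : vtx) : Prop := dist_eq x u k.

(* corner vertices of F_{x,k} for a right vertex x = (i,j), k >= 2 *)
Definition corners (x : vtx) (k : nat) : list vtx :=
  let i := fst x in let j := snd x in let K := Z.of_nat k in
  let c := (K + 1) / 2 in
  let fl := K / 2 in
  [ (i, j + K); (i + c, j + fl); (i + c, j - fl); (i, j - K);
    (i - fl, j - c); (i - fl, j + c) ].

From Stdlib Require Import ZArith List Lia.
Open Scope Z_scope.

(* Graph distance on T_H has the closed form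
   d(u,w) = max(|Δi| + |Δj|, |col w - col u|), where col (i,j) = 2i - ((i+j) mod 2)
   numbers the "columns" of the hexagonal grid: every edge changes both terms by
   exactly one, and from any vertex some edge decreases the maximum.
   Put x at the origin.  A vertex u of F_{x,k} with d(u,v) > 2p, where v is a corner of
   F_{x,p-q} and k = p+q+1, satisfies d(u,v) = d(u,x) + d(x,v), which forces u onto
   the two sides of the hexagon F_{x,k} opposite to v.  On these sides a linear
   coordinate L controls the distance: for a scale s in {1, 2}, d(u,w) > 2p forces
   |L u - L w| >= s p, while L ranges over an interval of length s k < 2 s p.
   Three such vertices cannot fit. *)

Definition col (u : vtx) : Z := 2 * fst u - (fst u + snd u) mod 2.

Definition hex_dist (u w : vtx) : Z :=
  Z.max (Z.abs (fst w - fst u) + Z.abs (snd w - snd u)) (Z.abs (col w - col u)).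

Lemma even_iff_mod2 z : Z.even z = true <-> z mod 2 = 0.
Proof. rewrite Zeven_mod. apply Z.eqb_eq. Qed.

Lemma mod2_cases z :
  (z mod 2 = 0 /\ exists m, z = 2 * m) \/ (z mod 2 = 1 /\ exists m, z = 2 * m + 1).
Proof.
  pose proof (Z.div_mod z 2 ltac:(lia)). pose proof (Z.mod_pos_bound z 2 ltac:(lia)).
  assert (z mod 2 = 0 \/ z mod 2 = 1) as [E|E] by lia; [left|right];
    split; try exists (z / 2); lia.
Qed.

(* Replaces every [z mod 2] in the goal by its value, keeping the parity of [z]. *)
Ltac case_mod2 :=
  repeat match goal with
  | |- context [?z mod 2] =>
      let E := fresh "E" in let m := fresh "m" in let Hm := fresh "Hm" in
      destruct (mod2_cases z) as [[E [m Hm]] | [E [m Hm]]]; rewrite E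
  end.

Lemma hex_dist_refl u : hex_dist u u = 0.
Proof. unfold hex_dist; lia. Qed.

Lemma hex_dist_nonneg u v : 0 <= hex_dist u v.
Proof. unfold hex_dist; lia. Qed.

Lemma hex_dist_eq0 u v : hex_dist u v = 0 -> u = v.
Proof.
  destruct u as [i j], v as [s t]; unfold hex_dist; cbn [fst snd]; intros.
  f_equal; lia.
Qed.

Lemma hex_dist_adj u w v : adj u w -> hex_dist u v <= hex_dist w v + 1.
Proof.
  destruct u as [i j], w as [k l], v as [s t]; unfold adj, hex_dist, col; cbn [fst snd].
  rewrite !even_iff_mod2.
  intros [[-> [-> | ->]] | [[-> [-> H]] | [-> [-> H]]]].
  all: Z.div_mod_to_equations; lia.
Qed.

(* Step horizontally when the column difference dominates and points the way the
   horizontal edge moves (towards larger columns at a right vertex, smaller at a left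
   one); otherwise step vertically towards v. *)
Lemma hex_dist_step u v : u <> v -> exists w, adj u w /\ hex_dist w v = hex_dist u v - 1.
Proof.
  destruct u as [i j], v as [s t]; intros Hne.
  assert (Hst : s <> i \/ t <> j)
    by (destruct (Z.eq_dec s i), (Z.eq_dec t j); subst; auto).
  set (L1 := Z.abs (s - i) + Z.abs (t - j)).
  set (dc := col (s, t) - col (i, j)).
  destruct (mod2_cases (i + j)) as [[Hr _] | [Hr _]].
  - destruct (Z.le_gt_cases L1 dc) as [Hc | Hc];
      [exists (i + 1, j) | destruct (Z.lt_ge_cases 0 (t - j));
                           [exists (i, j + 1) | exists (i, j - 1)]].
    all: split; [unfold adj; rewrite !even_iff_mod2 | unfold hex_dist, col in *; cbn [fst snd] in *].
    all: Z.div_mod_to_equations; lia.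
  - destruct (Z.le_gt_cases L1 (- dc)) as [Hc | Hc];
      [exists (i - 1, j) | destruct (Z.lt_ge_cases 0 (t - j));
                           [exists (i, j + 1) | exists (i, j - 1)]].
    all: split; [unfold adj; rewrite !even_iff_mod2 | unfold hex_dist, col in *; cbn [fst snd] in *].
    all: Z.div_mod_to_equations; lia.
Qed.

Lemma walk_hex_dist_le u v m : walk u v m -> hex_dist u v <= Z.of_nat m.
Proof.
  induction 1 as [u | u w v m Huw _ IH].
  - rewrite hex_dist_refl; lia.
  - pose proof (hex_dist_adj u w v Huw); lia.
Qed.

Lemma walk_of_hex_dist n : forall u v, hex_dist u v = Z.of_nat n -> walk u v n.
Proof.
  induction n as [| n IH]; intros u v Hd.
  - rewrite (hex_dist_eq0 u v Hd); constructor.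
  - assert (Hne : u <> v) by (intros ->; rewrite hex_dist_refl in Hd; lia).
    destruct (hex_dist_step u v Hne) as [w [Huw Hw]].
    apply walk_cons with w; [exact Huw | apply IH; lia].
Qed.

Lemma F_hex_dist x k u : F x k u -> hex_dist x u = Z.of_nat k.
Proof.
  intros [Hw Hmin].
  pose proof (walk_hex_dist_le _ _ _ Hw). pose proof (hex_dist_nonneg x u).
  destruct (Z.lt_ge_cases (hex_dist x u) (Z.of_nat k)) as [Hlt | Hge]; [| lia].
  exfalso; apply (Hmin (Z.to_nat (hex_dist x u))); [lia |].
  apply walk_of_hex_dist; lia.
Qed.

Lemma same_color_hex_dist p n f u w :
  distance_coloring p n f -> u <> w -> f u = f w -> Z.of_nat (2 * p) < hex_dist u w.
Proof.
  intros [_ Hcol] Hne Hf. pose proof (hex_dist_nonneg u w).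
  destruct (Z.lt_ge_cases (Z.of_nat (2 * p)) (hex_dist u w)) as [Hlt | Hge]; [exact Hlt |].
  exfalso; apply (Hcol u w Hne); [| exact Hf].
  exists (Z.to_nat (hex_dist u w)); split; [lia |].
  apply walk_of_hex_dist; lia.
Qed.

Definition vsub (u x : vtx) : vtx := (fst u - fst x, snd u - snd x).

Lemma col_vsub u x : (fst x + snd x) mod 2 = 0 -> col (vsub u x) = col u - col x.
Proof.
  destruct u as [a b], x as [i j]; unfold col, vsub; cbn [fst snd]; intros.
  Z.div_mod_to_equations; lia.
Qed.

Lemma hex_dist_vsub x u w :
  (fst x + snd x) mod 2 = 0 -> hex_dist (vsub u x) (vsub w x) = hex_dist u w.
Proof.
  intros Hx. unfold hex_dist. rewrite !col_vsub by exact Hx.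
  unfold vsub; cbn [fst snd]. f_equal; f_equal; lia.
Qed.

Lemma vsub_diag x : vsub x x = (0, 0).
Proof. unfold vsub; f_equal; lia. Qed.

Inductive corner_dir := North | NorthEast | SouthEast | South | SouthWest | NorthWest.

Definition corner_vec (d : corner_dir) (K : Z) : vtx :=
  match d with
  | North => (0, K)
  | NorthEast => ((K + 1) / 2, K / 2)
  | SouthEast => ((K + 1) / 2, - (K / 2))
  | South => (0, - K)
  | SouthWest => (- (K / 2), - ((K + 1) / 2))
  | NorthWest => (- (K / 2), (K + 1) / 2)
  end.

Lemma corners_vsub x K v :
  In v (corners x K) -> exists d, vsub v x = corner_vec d (Z.of_nat K).
Proof.
  destruct x as [i j]; unfold corners, vsub; cbn [fst snd In].
  intros [<- | [<- | [<- | [<- | [<- | [<- | []]]]]]];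
    [exists North | exists NorthEast | exists SouthEast
    | exists South | exists SouthWest | exists NorthWest];
    cbn [fst snd corner_vec]; f_equal; lia.
Qed.

Definition corner_col (d : corner_dir) (K : Z) : Z :=
  match d with
  | North | South => - (K mod 2)
  | NorthEast | SouthEast => K
  | SouthWest | NorthWest => - K
  end.

Lemma col_origin : col (0, 0) = 0.
Proof. reflexivity. Qed.

Lemma col_corner d K : col (corner_vec d K) = corner_col d K.
Proof.
  unfold col; destruct d; cbn [fst snd corner_vec corner_col].
  all: Z.div_mod_to_equations; lia.
Qed.

Lemma hex_dist_corner d K : 0 <= K -> hex_dist (0, 0) (corner_vec d K) = K.
Proof.
  intros HK; unfold hex_dist, col; destruct d; cbn [fst snd corner_vec].
  all: Z.div_mod_to_equations; lia.
Qed.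

(* The two sides of the hexagon of radius k that meet at the corner opposite to the
   corner in direction d, each described by linear constraints. *)
Definition opposite_side (d : corner_dir) (k : Z) (u : vtx) : Prop :=
  let a := fst u in let b := snd u in
  match d with
  | North => (0 <= a /\ b < 0 /\ a - b = k /\ col u <= k)
             \/ (a <= 0 /\ b < 0 /\ a + b = - k /\ - k <= col u)
  | South => (0 <= a /\ 0 < b /\ a + b = k /\ col u <= k)
             \/ (a <= 0 /\ 0 < b /\ b - a = k /\ - k <= col u)
  | NorthEast => (col u = - k /\ - (k + a) <= b <= k + a)
                 \/ (a <= 0 /\ b <= 0 /\ a + b = - k /\ - k <= col u)
  | SouthEast => (col u = - k /\ - (k + a) <= b <= k + a)
                 \/ (a <= 0 /\ 0 <= b /\ b - a = k /\ - k <= col u)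
  | SouthWest => (col u = k /\ - (k - a) <= b <= k - a)
                 \/ (0 <= a /\ 0 <= b /\ a + b = k /\ col u <= k)
  | NorthWest => (col u = k /\ - (k - a) <= b <= k - a)
                 \/ (0 <= a /\ b <= 0 /\ a - b = k /\ col u <= k)
  end.

Definition side_coord (d : corner_dir) (u : vtx) : Z :=
  match d with
  | North | South => fst u
  | NorthEast | SouthWest => fst u - snd u
  | SouthEast | NorthWest => fst u + snd u
  end.

Definition side_scale (d : corner_dir) : Z :=
  match d with North | South => 1 | _ => 2 end.

Definition side_low (d : corner_dir) (k : Z) : Z :=
  match d with North | South => - (k / 2) | _ => - k end.

Lemma opposite_side_of_far d K k u : 2 <= K -> 2 <= k ->
  hex_dist (0, 0) u <= k -> k + K <= hex_dist u (corner_vec d K) -> opposite_side d k u.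
Proof.
  destruct u as [a b]; intros HK Hk.
  unfold hex_dist; rewrite col_corner, col_origin.
  assert (HK2 : K = 2 * (K / 2) + K mod 2) by (apply Z.div_mod; lia).
  assert (Hf : K mod 2 = 0 \/ K mod 2 = 1) by (pose proof (Z.mod_pos_bound K 2); lia).
  assert (HK1 : (K + 1) / 2 = K / 2 + K mod 2) by (Z.div_mod_to_equations; lia).
  unfold corner_vec, corner_col; destruct d; rewrite ?HK1;
    revert HK2 Hf; generalize (K / 2) (K mod 2); intros n f -> Hf;
    unfold opposite_side, col; cbn [fst snd]; case_mod2;
    rewrite Z.max_lub_iff, Z.max_le_iff; intros [Hu1 Hu2] [Hv | Hv].
  all: destruct Hf as [-> | ->]; lia.
Qed.

Lemma side_separation d k p u w :
  opposite_side d k u -> opposite_side d k w ->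
  2 * p < hex_dist u w -> side_scale d * p <= Z.abs (side_coord d u - side_coord d w).
Proof.
  destruct u as [a b], w as [a' b'].
  unfold hex_dist, opposite_side, side_coord, side_scale, col.
  destruct d; cbn [fst snd]; case_mod2; intros [Hu | Hu] [Hw | Hw] Hd.
  all: lia.
Qed.

Lemma side_coord_range d k u : 0 <= k -> opposite_side d k u ->
  side_low d k <= side_coord d u <= side_low d k + side_scale d * k.
Proof.
  destruct u as [a b]; unfold opposite_side, side_coord, side_scale, side_low, col.
  destruct d; cbn [fst snd]; case_mod2; intros.
  all: Z.div_mod_to_equations; lia.
Qed.

Lemma opposite_side_no_three d k p u1 u2 u3 : 0 <= k < 2 * p ->
  opposite_side d k u1 -> opposite_side d k u2 -> opposite_side d k u3 ->
  2 * p < hex_dist u1 u2 -> 2 * p < hex_dist u1 u3 -> 2 * p < hex_dist u2 u3 -> False.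
Proof.
  intros Hk H1 H2 H3 H12 H13 H23.
  pose proof (side_separation _ _ _ _ _ H1 H2 H12).
  pose proof (side_separation _ _ _ _ _ H1 H3 H13).
  pose proof (side_separation _ _ _ _ _ H2 H3 H23).
  pose proof (side_coord_range _ _ _ (proj1 Hk) H1).
  pose proof (side_coord_range _ _ _ (proj1 Hk) H2).
  pose proof (side_coord_range _ _ _ (proj1 Hk) H3).
  assert (0 < side_scale d) by (destruct d; cbn; lia).
  nia.
Qed.

Lemma same_color_as_corner_opposite p q n f x v d u :
  (2 <= p)%nat -> (q <= p - 2)%nat -> right_vertex x -> distance_coloring p n f ->
  vsub v x = corner_vec d (Z.of_nat (p - q)) ->
  F x (p + q + 1) u -> f u = f v -> opposite_side d (Z.of_nat (p + q + 1)) (vsub u x).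
Proof.
  intros Hp Hq Hx Hcol Hv Hu Hfu.
  apply even_iff_mod2 in Hx.
  apply F_hex_dist in Hu.
  assert (Hxv : hex_dist x v = Z.of_nat (p - q)).
  { rewrite <- (hex_dist_vsub x x v Hx), vsub_diag, Hv. apply hex_dist_corner; lia. }
  assert (Hne : u <> v) by (intros ->; lia).
  pose proof (same_color_hex_dist p n f u v Hcol Hne Hfu) as Hfar.
  rewrite <- (hex_dist_vsub x) in Hu, Hfar by exact Hx.
  rewrite vsub_diag in Hu. rewrite Hv in Hfar.
  apply opposite_side_of_far with (K := Z.of_nat (p - q)); lia.
Qed.

Theorem mainTheorem6 :
  forall (p q n : nat) (x v : vtx) (f : vtx -> nat),
    (2 <= p)%nat -> (q <= p - 2)%nat ->
    right_vertex x ->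
    distance_coloring p n f ->
    In v (corners x (p - q)) ->
    forall us : list vtx,
      NoDup us ->
      (forall u, In u us -> F x (p + q + 1) u /\ f u = f v) ->
      (length us <= 2)%nat.
Proof.
  intros p q n x v f Hp Hq Hx Hcol Hv us Hnd Hus.
  destruct us as [| u1 [| u2 [| u3 us']]]; cbn [length]; try lia; exfalso.
  apply NoDup_cons_iff in Hnd as [Hn1 Hnd]; apply NoDup_cons_iff in Hnd as [Hn2 _].
  assert (H12 : u1 <> u2) by (intros ->; apply Hn1; cbn; auto).
  assert (H13 : u1 <> u3) by (intros ->; apply Hn1; cbn; auto).
  assert (H23 : u2 <> u3) by (intros ->; apply Hn2; cbn; auto).
  destruct (corners_vsub x _ v Hv) as [d Hd].
  pose proof (proj1 (even_iff_mod2 _) Hx) as Hx2.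
  assert (Hside : forall u, In u (u1 :: u2 :: u3 :: us') ->
                            opposite_side d (Z.of_nat (p + q + 1)) (vsub u x)).
  { intros u Hu; destruct (Hus u Hu).
    eapply same_color_as_corner_opposite; eauto. }
  assert (Hfar : forall u w, In u (u1 :: u2 :: u3 :: us') -> In w (u1 :: u2 :: u3 :: us') ->
                   u <> w -> 2 * Z.of_nat p < hex_dist (vsub u x) (vsub w x)).
  { intros u w Hu Hw Hne. rewrite hex_dist_vsub by exact Hx2.
    destruct (Hus u Hu), (Hus w Hw).
    enough (Z.of_nat (2 * p) < hex_dist u w) by lia.
    apply (same_color_hex_dist p n f); [exact Hcol | exact Hne | congruence]. }
  apply (opposite_side_no_three d (Z.of_nat (p + q + 1)) (Z.of_nat p)
           (vsub u1 x) (vsub u2 x) (vsub u3 x)); [lia | ..].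
  all: first [apply Hside | apply Hfar]; cbn; auto.
Qed.
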